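(* Let $G$ be a finite $p$-group, let $\Omega_1(Z(G)) = \{g \in Z(G) : g^p = 1\}$, and let $r = \operatorname{rank}(Z(G)) = \operatorname{rank}(\Omega_1(Z(G)))$. (a) Let $\rho_1$ be an irreducible complex representation of $G$ such that $\operatorname{Ker}(\rho_1)$ does not contain $\Omega_1(Z(G))$. Then there are irreducible representations $\rho_2, \dots, \rho_r$ of $G$ such that $\rho_1 \oplus \cdots \oplus \rho_r$ is faithful. In particular, $\operatorname{rdim}(G) \le \dim(\rho_1) + (r-1)\sqrt{[G:Z(G)]}$. (b) If $\Omega_1(Z(G))$ is not contained in $[G,G]$, then $\operatorname{rdim}(G) \le 1 + (r-1)\sqrt{[G:Z(G)]}$.
   Context: $\operatorname{rdim}(G)$ is the minimal dimension of a faithful complex linear representation of $G$. The rank of a finite abelian group is its minimal number of generators. *)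

From HB Require Import structures.
From mathcomp Require Import all_boot all_order all_algebra all_fingroup all_solvable all_field all_character.
From mathcomp Require Import boolp.
Set Implicit Arguments. Unset Strict Implicit. Unset Printing Implicit Defensive.
Import GRing.Theory Num.Theory.
Local Open Scope ring_scope.

Section Defs.
Variables (gT : finGroupType) (G : {group gT}).

Record rep := Rep { rdeg : nat; rrep : mx_representation algC G rdeg }.

Definition dsum_mx n1 n2 (r1 : mx_representation algC G n1)
  (r2 : mx_representation algC G n2) (x : gT) : 'M[algC]_(n1 + n2) :=
  block_mx (r1 x) 0 0 (r2 x).

Lemma dsum_mx_repr n1 n2 (r1 : mx_representation algC G n1)
  (r2 : mx_representation algC G n2) : mx_repr G (dsum_mx r1 r2).
Proof.
split=> [|x y Gx Gy]; rewrite /dsum_mx.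
  by rewrite !repr_mx1 -scalar_mx_block.
by rewrite mulmx_block !mulmx0 !mul0mx !addr0 !add0r !repr_mxM.
Qed.

Definition dsum_rep (a b : rep) : rep :=
  Rep (MxRepresentation (dsum_mx_repr (rrep a) (rrep b))).

Lemma rep0_repr : mx_repr G (fun _ : gT => (1%:M : 'M[algC]_0)).
Proof. by split=> // x y _ _; rewrite mulmx1. Qed.
Definition rep0 : rep := Rep (MxRepresentation rep0_repr).

Fixpoint dsum_list (s : seq rep) : rep :=
  match s with
  | [::] => rep0
  | [:: a] => a
  | a :: s' => dsum_rep a (dsum_list s')
  end.

Definition has_faithful_rep (n : nat) : bool :=
  `[< exists rG : mx_representation algC G n, mx_faithful rG >].

Lemma has_faithful_rep_ex : exists n, has_faithful_rep n.
Proof.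
exists (gcard G); apply/asboolP; exists (regular_repr algC G).
exact: regular_mx_faithful.
Qed.

Definition rdim : nat := ex_minn has_faithful_rep_ex.

End Defs.

Definition Omega1Z (gT : finGroupType) (G : {group gT}) (p : nat) : {set gT} :=
  [set g in ('Z(G))%g | (g ^+ p == 1)%g].

(* A normal subgroup of a p-group that meets Omega_1(Z(G)) trivially is
   trivial, so a representation is faithful as soon as its kernel meets the
   elementary abelian group E := Omega_1(Z(G)) of rank r trivially.  If rho_1
   does not contain E in its kernel, then E :&: ker rho_1 has rank at most
   r - 1, and each irreducible representation that does not kill a chosen
   nontrivial element of the current intersection lowers that rank; r - 1
   irreducibles therefore suffice, each of degree at most sqrt [G : Z(G)].
   For (b), an element of E outside G' is detected by a linear character. *)
From HB Require Import structures.
From mathcomp Require Import all_boot all_order all_algebra all_fingroup all_solvable all_field all_character.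
Set Implicit Arguments. Unset Strict Implicit. Unset Printing Implicit Defensive.
Import Order.TTheory GRing.Theory Num.Theory.
Local Open Scope ring_scope.

Section Faithful.
Variables (gT : finGroupType) (G : {group gT}).

Lemma rker_dsum_rep (a b : rep G) x :
  (x \in rker (rrep (dsum_rep a b))) = (x \in rker (rrep a)) && (x \in rker (rrep b)).
Proof.
apply/rkerP/andP => /= [[Gx]|[/rkerP[Gx ea] /rkerP[_ eb]]].
  by rewrite /dsum_mx scalar_mx_block => /eq_block_mx[ea _ _ eb]; split; apply/rkerP.
by split=> //; rewrite /dsum_mx ea eb -scalar_mx_block.
Qed.

Lemma rker_dsum_list s x :
  (x \in rker (rrep (dsum_list s))) = (x \in G) && all (fun a : rep G => x \in rker (rrep a)) s.
Proof.
elim: s => [|a s IH] /=; first by rewrite andbT; apply/rkerP/idP => [[]|].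
case: s IH => [|b s] IH.
  by rewrite andbT; apply/idP/andP => [kx|[]//]; split=> //; case/rkerP: kx.
by rewrite -/(dsum_list (b :: s)) rker_dsum_rep IH andbCA.
Qed.

Lemma rdeg_dsum_list a s :
  rdeg (dsum_list (a :: s)) = (rdeg a + sumn [seq rdeg b | b : rep G <- s])%N.
Proof.
elim: s a => [|b s IH] a /=; first by rewrite addn0.
by rewrite -/(dsum_list (b :: s)) IH.
Qed.

Lemma rker_Chi i : rker 'Chi_i = cfker 'chi[G]_i.
Proof. by rewrite -cfker_repr irrRepr. Qed.

Lemma rdim_leq n (rG : mx_representation algC G n) : mx_faithful rG -> (rdim G <= n)%N.
Proof. by move=> ffG; rewrite /rdim; case: ex_minnP => m _; apply; apply/boolp.asboolP; exists rG. Qed.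

Lemma irr1_le_sqrt_index i : 'chi[G]_i 1%g <= sqrtC (#|G : 'Z(G)|%g%:R).
Proof.
have chi1_ge0 := ltW (irr1_gt0 i).
rewrite -(sqrCK chi1_ge0) ler_sqrtC ?qualifE /= ?exprn_ge0 ?ler0n //.
apply: le_trans (irr1_bound i).1 _; rewrite ler_nat dvdn_leq //.
by apply: indexgS => /=; rewrite -(cap_cfcenter_irr G); exact: bigcap_inf.
Qed.

Lemma rdim_dsum_irr_le k n1 (rho1 : mx_representation algC G n1) (f : 'I_k -> Iirr G) :
    mx_faithful (rrep (dsum_list (Rep rho1 :: [seq Rep 'Chi_(f i) | i <- enum 'I_k]))) ->
  ((rdim G)%:R : algC) <= n1%:R + k%:R * sqrtC (#|G : 'Z(G)|%g%:R).
Proof.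
move/rdim_leq; rewrite rdeg_dsum_list -map_comp -(ler_nat algC) => /le_trans; apply.
rewrite natrD lerD2l sumnE big_map natr_sum big_enum /=.
under eq_bigr do rewrite /= -irr1_degree.
apply: le_trans (ler_sum _ (fun i _ => irr1_le_sqrt_index (f i))) _.
by rewrite sumr_const card_ord mulr_natl.
Qed.

Variable p : nat.
Hypothesis pr_p : prime p.

(* Induction on k: an irreducible character whose kernel misses some x in
   K \ 1 cuts K down to a proper subgroup, lowering logn p #|K|. *)
Lemma irr_cfker_separate k (K : {group gT}) :
    (p.-group K)%g -> (logn p #|K| <= k)%N ->
  exists f : 'I_k -> Iirr G,
    forall x, x \in K -> (forall j, x \in cfker 'chi_(f j)) -> x = 1%g.
Proof.
elim: k K => [|k IHk] K pK logK.
  have K1 : K :=: 1%g.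
    by apply: card1_trivg; rewrite (card_pgroup pK); move: logK; rewrite leqn0 => /eqP->.
  by exists (fun _ => 0) => x; rewrite K1 => /set1P.
have [K1|/trivgPn[x Kx ntx]] := eqVneq K 1%G.
  by exists (fun _ => 0) => y; rewrite K1 => /set1P.
have [i kerNx] : exists i, x \notin cfker 'chi[G]_i.
  apply/existsP; apply: contra_neqT ntx; rewrite negb_exists => /forallP kerx.
  suff: x \in \bigcap_i cfker 'chi[G]_i by rewrite TI_cfker_irr => /set1P.
  by apply/bigcapP => i _; apply/negPn.
have ltK : K :&: cfker 'chi_i \proper K.
  by rewrite properE subsetIl; apply/subsetPn; exists x; rewrite // inE Kx.
have pKi : (p.-group (K :&: cfker 'chi_i))%g := pgroupS (subsetIl _ _) pK.
have logKi : (logn p #|K :&: cfker 'chi_i| <= k)%N.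
  move: (proper_card ltK); rewrite (card_pgroup pK) (card_pgroup pKi) pfactorK //.
  rewrite ltn_exp2l ?prime_gt1 // => lt_logK; exact: leq_trans lt_logK logK.
have [f kerf] := IHk [group of K :&: cfker 'chi_i] pKi logKi.
exists (fun j => if unlift ord0 j is Some j' then f j' else i) => y Ky kery.
apply: kerf => [|j]; last by move: (kery (lift ord0 j)); rewrite liftK.
by rewrite inE Ky; move: (kery ord0); rewrite unlift_none.
Qed.

Hypothesis pG : (p.-group G)%g.

Lemma Omega1Z_Ohm : Omega1Z G p = 'Ohm_1('Z(G))%g.
Proof.
have pZ := pgroupS (center_sub G) pG.
rewrite (OhmEabelian pZ) ?expn1; last exact: abelianS (Ohm_sub 1 _) (center_abelian G).
by apply/setP => x; rewrite !inE.
Qed.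

Lemma rank_center_Ohm1 : ('m('Z(G)))%g = logn p #|'Ohm_1('Z(G))%g|.
Proof.
have pZ := pgroupS (center_sub G) pG.
by rewrite grank_abelian ?center_abelian // (rank_abelian_pgroup pZ) ?center_abelian.
Qed.

Lemma faithful_dsum_irr_exists n1 (rho1 : mx_representation algC G n1) :
    ~~ (Omega1Z G p \subset rker rho1) ->
  exists f : 'I_('m('Z(G)))%g.-1 -> Iirr G,
   mx_faithful (rrep (dsum_list (Rep rho1 :: [seq Rep 'Chi_(f i) | i <- enum 'I_('m('Z(G)))%g.-1]))).
Proof.
rewrite Omega1Z_Ohm => notE.
set E := 'Ohm_1('Z(G))%G.
have pE : (p.-group E)%g := pgroupS (Ohm_sub 1 _) (pgroupS (center_sub G) pG).
have pK : (p.-group (E :&: rker rho1))%g := pgroupS (subsetIl _ _) pE.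
have logK : (logn p #|E :&: rker rho1| <= ('m('Z(G)))%g.-1)%N.
  have ltK : E :&: rker rho1 \proper E by rewrite properE subsetIl subsetI subxx.
  rewrite rank_center_Ohm1; move: (proper_card ltK).
  rewrite (card_pgroup pK) (card_pgroup pE) !pfactorK // ltn_exp2l ?prime_gt1 //.
  by case: (logn p #|E|).
have [f kerf] := irr_cfker_separate pK logK.
exists f; apply/trivgP.
apply: (TI_center_nil (pgroup_nil pG) (rker_normal _)); apply: TI_Ohm1.
apply/trivgP/subsetP => y /setIP[].
rewrite rker_dsum_list /= all_map => /and3P[_ kery1 /allP keryf] Ey.
apply/set1P/kerf => [|j]; first by rewrite inE Ey kery1.
by rewrite -rker_Chi; apply: (keryf _ (mem_enum _ j)).
Qed.

End Faithful.

Lemma linear_char_notin_cfker (gT : finGroupType) (G : {group gT}) x :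
  x \notin (G^`(1))%g -> exists2 i, 'chi[G]_i \is a linear_char & x \notin cfker 'chi_i.
Proof.
move=> notG'x; apply/exists_inP; apply: contraR notG'x => /exists_inPn kerx.
by rewrite -cap_cfker_lin_irr; apply/bigcapP => i /kerx/negPn.
Qed.

Theorem lemma3p1 (gT : finGroupType) (G : {group gT}) (p : nat) :
  prime p -> (p.-group G)%g ->
  let r := ('m('Z(G)))%g in
  (* (a) *)
  (forall (n1 : nat) (rho1 : mx_representation algC G n1),
     mx_irreducible rho1 ->
     ~~ (Omega1Z G p \subset rker rho1) ->
     (exists rhos : 'I_r.-1 -> rep G,
        (forall i, mx_irreducible (rrep (rhos i))) /\
        mx_faithful (rrep (dsum_list (Rep rho1 :: [seq rhos i | i <- enum 'I_r.-1]))))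
     /\ ((rdim G)%:R : algC) <= n1%:R + (r.-1)%:R * sqrtC (#|G : 'Z(G)|%g%:R))
  /\
  (* (b) *)
  (~~ (Omega1Z G p \subset (G^`(1))%g) ->
     ((rdim G)%:R : algC) <= 1 + (r.-1)%:R * sqrtC (#|G : 'Z(G)|%g%:R)).
Proof.
move=> pr_p pG r; split=> [n1 rho1 _ notE|].
  have [f ffG] := faithful_dsum_irr_exists pr_p pG notE.
  split; last exact: rdim_dsum_irr_le ffG.
  by exists (fun i => Rep 'Chi_(f i)); split=> // i; apply: socle_irr.
case/subsetPn=> x Ex notG'x.
have [i lin_i kerNx] := linear_char_notin_cfker notG'x.
have notE : ~~ (Omega1Z G p \subset rker 'Chi_i).
  by apply/subsetPn; exists x; rewrite // rker_Chi.
have [f ffG] := faithful_dsum_irr_exists pr_p pG notE.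
have := rdim_dsum_irr_le ffG; rewrite -irr1_degree lin_char1 //.
Qed.
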